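(* Let $(X,\mathcal{S})$ be a finite set system with $|X|=n=2^k$ for an integer $k\ge1$, and let the packings $\mathcal{F}_j$, the chains $F_j(S)$, the classes $\mathcal{S}_i$ and the families $\mathcal{F}_j^i$ be as defined in the context. Then for every $1\le i\le k$, every $S\in\mathcal{S}_i$ and every $j$ with $i-1\le j\le k$, $$|S\triangle F_j(S)|<\frac{n}{2^{j-1}} .$$
   Context: $\triangle$ denotes symmetric difference. Construction: set $\mathcal{F}_0=\{\emptyset\}$, and for $j=1,\dots,k$ let $\mathcal{F}_j\subseteq\mathcal{S}$ be a family that is maximal under inclusion subject to $|F\triangle F'|>n/2^j$ for all distinct $F,F'\in\mathcal{F}_j$. For $S\in\mathcal{S}$ define the nearest-neighbor chain $F_k(S):=S$ and, for $j=k,k-1,\dots,1$, let $F_{j-1}(S)$ be an element of $\mathcal{F}_{j-1}$ minimizing $|F_j(S)\triangle F|$ over $F\in\mathcal{F}_{j-1}$. For $i=1,\dots,k$ let $\mathcal{S}_i=\{S\in\mathcal{S}: n/2^i\le|S|<n/2^{i-1}\}$, and for $j=i-1,\dots,k$ let $\mathcal{F}_j^i=\{F_j(S):S\in\mathcal{S}_i\}$. *)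

From mathcomp Require Import all_boot.
Set Implicit Arguments. Unset Strict Implicit. Unset Printing Implicit Defensive.

Definition symdiff (T : finType) (A B : {set T}) : {set T} :=
  (A :\: B) :|: (B :\: A).

(* P is a packing at scale j: distinct members F, F' satisfy
   |F (+) F'| > n / 2^j   (written multiplicatively: n < 2^j * |F (+) F'|) *)
Definition separated (T : finType) (n j : nat) (P : {set {set T}}) : Prop :=
  forall F F', F \in P -> F' \in P -> F != F' -> n < 2 ^ j * #|symdiff F F'|.

Definition maximal_packing (T : finType) (n j : nat) (Sys P : {set {set T}}) : Prop :=
  [/\ P \subset Sys, separated n j P &
      forall Q : {set {set T}}, P \proper Q -> Q \subset Sys -> ~ separated n j Q].

Definition packings (T : finType) (n k : nat) (Sys : {set {set T}})
  (Fam : nat -> {set {set T}}) : Prop :=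
  Fam 0 = [set set0] /\ forall j, 1 <= j <= k -> maximal_packing n j Sys (Fam j).

(* ch S j = F_j(S): the nearest-neighbour chain, for every S in Sys *)
Definition nn_chains (T : finType) (k : nat) (Sys : {set {set T}})
  (Fam : nat -> {set {set T}}) (ch : {set T} -> nat -> {set T}) : Prop :=
  forall S, S \in Sys ->
    ch S k = S /\
    forall j, 1 <= j <= k ->
      ch S j.-1 \in Fam j.-1 /\
      forall F, F \in Fam j.-1 -> #|symdiff (ch S j) (ch S j.-1)| <= #|symdiff (ch S j) F|.

From mathcomp Require Import all_boot.
From mathcomp Require Import zify.

Set Implicit Arguments.
Unset Strict Implicit.

(* Consecutive links of a chain are close: for l >= 1 the set
   F_(l+1)(S) belongs to the system, so by maximality of the packing F_l some member of F_l
   is within n/2^l of it, and F_l(S) is the nearest one; for l = 0 the bound n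
   is trivial.  Telescoping, |S (+) F_j(S)| <= sum_(j <= l < k) n/2^l < 2n/2^j. *)

Lemma symdiffC (T : finType) (A B : {set T}) : symdiff A B = symdiff B A.
Proof. by rewrite /symdiff setUC. Qed.

Lemma symdiffxx (T : finType) (A : {set T}) : symdiff A A = set0.
Proof. by rewrite /symdiff setDv setU0. Qed.

Lemma card_symdiff_triangle (T : finType) (A B C : {set T}) :
  #|symdiff A C| <= #|symdiff A B| + #|symdiff B C|.
Proof.
apply: leq_trans (leq_card_setU _ _); apply: subset_leq_card.
apply/subsetP => x; rewrite /symdiff !inE.
by case: (x \in A); case: (x \in B); case: (x \in C).
Qed.

Lemma maximal_packing_net (T : finType) (n j : nat) (Sys P : {set {set T}}) G :
  maximal_packing n j Sys P -> G \in Sys ->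
  exists2 F, F \in P & 2 ^ j * #|symdiff G F| <= n.
Proof.
move=> [sPS sepP maxP] GS.
have [/exists_inP [F FP GF]|/exists_inPn far] :=
  boolP [exists F in P, 2 ^ j * #|symdiff G F| <= n]; first by exists F.
have GnP : G \notin P.
  by apply/negP => /far; rewrite symdiffxx cards0 muln0.
exfalso; apply: (maxP (G |: P)).
- by apply: properUr; rewrite sub1set.
- by rewrite subUset sub1set GS.
move=> F F'; rewrite !in_setU1 => /orP [/eqP-> | FP] /orP [/eqP-> | F'P] neq.
- by rewrite eqxx in neq.
- by rewrite ltnNge far.
- by rewrite symdiffC ltnNge far.
- exact: sepP.
Qed.

Section NearestNeighbourChain.

Variables (T : finType) (n k : nat) (Sys : {set {set T}}).
Variables (Fam : nat -> {set {set T}}) (ch : {set T} -> nat -> {set T}).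
Hypothesis card_T : #|T| <= n.
Hypothesis packFam : packings n k Sys Fam.
Hypothesis chains : nn_chains k Sys Fam ch.
Variable S : {set T}.
Hypothesis SinSys : S \in Sys.

Lemma chain_mem_sys j : 1 <= j <= k -> ch S j \in Sys.
Proof.
have [chk chain_step] := chains SinSys.
case/andP=> j_gt0; rewrite leq_eqVlt => /orP [/eqP-> | jk]; first by rewrite chk.
have [chj _] := chain_step j.+1 jk.
have j_range : 1 <= j <= k by rewrite j_gt0 ltnW.
have [sFS _ _] := packFam.2 j j_range.
exact: (subsetP sFS _ chj).
Qed.

Lemma chain_link_bound l : l < k ->
  2 ^ l * #|symdiff (ch S l.+1) (ch S l)| <= n.
Proof.
move=> lk; have [_ chain_step] := chains SinSys.
have [_ nearest] := chain_step l.+1 lk.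
case: l lk nearest => [|l] lk nearest.
  by rewrite mul1n (leq_trans (max_card _)).
have l_range : 1 <= l.+1 <= k by rewrite /= ltnW.
have [F FP close] := maximal_packing_net (packFam.2 _ l_range)
  (chain_mem_sys (lk : 1 <= l.+2 <= k)).
by apply: leq_trans close; rewrite leq_mul2l (nearest _ FP) orbT.
Qed.

Hypothesis pow_k : 2 ^ k <= n.

(* Multiplied by 2^j, the distance plus the remaining geometric tail is at most 2n. *)
Lemma chain_dist_bound j : j <= k ->
  2 ^ j * #|symdiff S (ch S j)| + 2 ^ j.+1 <= 2 * n.
Proof.
have [chk _] := chains SinSys.
move=> jk; rewrite -(subKn jk); elim: (k - j) (leq_subr j k) => [|m IH] mk.
  by rewrite subn0 chk symdiffxx cards0 muln0 add0n expnS leq_mul2l.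
have km : k - m = (k - m.+1).+1 by lia.
rewrite km in IH; have {}IH := IH (ltnW mk).
set l := k - m.+1 in IH *.
have link : 2 ^ l * #|symdiff (ch S l.+1) (ch S l)| <= n.
  by apply: chain_link_bound; rewrite /l; lia.
have tri := card_symdiff_triangle S (ch S l.+1) (ch S l).
have {}tri := leq_mul (leqnn (2 ^ l)) tri; rewrite mulnDr in tri.
rewrite !expnS in IH *; move: IH tri link; set x := 2 ^ l; nia.
Qed.

End NearestNeighbourChain.

Theorem mainTheorem5 (T : finType) (n k : nat) (Sys : {set {set T}})
  (Fam : nat -> {set {set T}}) (ch : {set T} -> nat -> {set T}) :
  1 <= k -> #|T| = n -> n = 2 ^ k ->
  packings n k Sys Fam -> nn_chains k Sys Fam ch ->
  forall i, 1 <= i <= k ->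
  forall S, S \in Sys -> n <= 2 ^ i * #|S| -> 2 ^ i * #|S| < 2 * n ->
  forall j, i.-1 <= j <= k ->
    2 ^ j * #|symdiff S (ch S j)| < 2 * n.
Proof.
move=> _ cardT nk packFam chains i _ S SinSys _ _ j /andP [_ jk].
have := chain_dist_bound (eq_leq cardT) packFam chains SinSys
  (eq_leq (esym nk)) jk.
by apply: leq_trans; rewrite -addn1 leq_add2l expn_gt0.
Qed.
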